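(* Let $N=((V\cup \{s\},A),\tau)$ be a temporal network with $n=|V|+1\ge 1$ vertices such that $\lambda_{N}(s,v)\ge n$ for all $v\in V$. Then $N$ contains two arc-disjoint spanning $\tau$-respecting $s$-arborescences.
   Context: A temporal network is a pair $N=(D,\tau)$ where $D=(V\cup\{s\},A)$ is a directed graph (parallel arcs allowed, cycles allowed) with root $s$ entered by no arc, and $\tau:A\to\mathbb{N}$. A directed path with arcs $a_1,\dots,a_\ell$ in order is $\tau$-respecting if $\tau(a_1)\le\dots\le\tau(a_\ell)$; $\lambda_N(s,v)$ is the maximum number of pairwise arc-disjoint $\tau$-respecting $(s,v)$-paths. An $s$-arborescence is an acyclic subgraph $F=(V'\cup\{s\},A')$ in which every vertex of $V'$ has in-degree exactly $1$; it is spanning if $V'=V$, and $\tau$-respecting if for every $v\in V'$ the unique $(s,v)$-path in $F$ is $\tau$-respecting. *)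

From mathcomp Require Import all_boot.
Set Implicit Arguments. Unset Strict Implicit. Unset Printing Implicit Defensive.

(* A temporal network: vertex type T (a finType containing the root s),
   arc type Arc (a finType, so parallel arcs are allowed), tail/head maps
   src/dst : Arc -> T, and time labels tau : Arc -> nat.  V = T \ {s}. *)

Section TemporalNetwork.
Variables (T Arc : finType) (src dst : Arc -> T) (tau : Arc -> nat).

Fixpoint is_walk (x y : T) (p : seq Arc) : bool :=
  match p with
  | [::] => x == y
  | a :: p' => (src a == x) && is_walk (dst a) y p'
  end.

Definition is_dpath (x y : T) (p : seq Arc) : bool :=
  is_walk x y p && uniq (x :: map dst p).

Definition tau_respecting (p : seq Arc) : bool := sorted leq (map tau p).

Definition tau_path (x y : T) (p : seq Arc) : bool :=
  is_dpath x y p && tau_respecting p.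

Definition lambda_ge (s v : T) (k : nat) : Prop :=
  exists P : 'I_k -> seq Arc,
    (forall i, tau_path s v (P i)) /\
    (forall i j, i != j -> forall a, a \in P i -> a \notin P j).

Definition has_cycle (F : {set Arc}) : Prop :=
  exists (x : T) (p : seq Arc),
    p != [::] /\ is_walk x x p /\ all (fun a => a \in F) p.

Definition spanning_arborescence (s : T) (F : {set Arc}) : Prop :=
  ~ has_cycle F /\
  (forall v, v != s -> #|[set a in F | dst a == v]| = 1).

(* tau-respecting: for every v in V the unique (s,v)-path of F is
   tau-respecting (stated as: every (s,v)-path using arcs of F is). *)
Definition tau_resp_arborescence (s : T) (F : {set Arc}) : Prop :=
  spanning_arborescence s F /\
  (forall v, v != s -> forall p, is_dpath s v p -> all (fun a => a \in F) p ->
     tau_respecting p).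

End TemporalNetwork.

From Stdlib Require Import ClassicalEpsilon.
From mathcomp Require Import all_boot zify.
Set Implicit Arguments. Unset Strict Implicit. Unset Printing Implicit Defensive.

(* If every vertex is reachable from s by a tau-respecting path inside an arc
   set B, then B contains a spanning tau-respecting arborescence: order the
   vertices by (earliest arrival time, number of hops) of an optimal path and
   give each vertex v <> s the last arc of such a path as parent arc.  This
   tree F1 has |V| = n - 1 arcs, so among the n arc-disjoint tau-paths to any
   vertex one avoids F1; hence the complement of F1 again reaches every vertex
   and contains a second arborescence F2. *)

Lemma ex_minimal_nat (P : nat -> Prop) :
  (exists n, P n) -> exists m, P m /\ forall j, P j -> m <= j.
Proof.
move=> [n Pn]; elim: n {-2}n (leqnn n) Pn => [|n IH] m le_mn Pm.
  by exists m; split=> // j _; move: le_mn; rewrite leqn0 => /eqP->.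
have [[j [Pj lt_jm]] | no_smaller] := classic (exists j, P j /\ j < m).
  by apply: (IH j) => //; rewrite -ltnS (leq_trans lt_jm le_mn).
exists m; split=> // j Pj; rewrite leqNgt; apply/negP => lt_jm.
by apply: no_smaller; exists j.
Qed.

Lemma sorted_leq_rcons (l : seq nat) t :
  sorted leq (rcons l t) = sorted leq l && (last 0 l <= t).
Proof. by case: l => [|x l] //=; rewrite rcons_path. Qed.

Lemma card_le_disjoint_hitting (I X : finType) (P : I -> seq X) (F : {set X}) :
  (forall i j, i != j -> forall a, a \in P i -> a \notin P j) ->
  (forall i, exists a, (a \in F) && (a \in P i)) ->
  #|I| <= #|F|.
Proof.
move=> disjP /fin_all_exists[f hitf].
have f_inj : injective f.
  move=> i j eq_fij; apply/eqP; apply: contraT => neq_ij.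
  have /andP[_ fPi] := hitf i; have /andP[_ fPj] := hitf j.
  by have := disjP i j neq_ij (f i) fPi; rewrite eq_fij fPj.
rewrite -cardsT -(card_imset _ f_inj).
apply: subset_leq_card; apply/subsetP => _ /imsetP[i _ ->].
by case/andP: (hitf i).
Qed.

Section TemporalArborescences.
Variables (T Arc : finType) (src dst : Arc -> T) (tau : Arc -> nat) (s : T).

Lemma is_walk_rcons x y q a :
  is_walk src dst x y (rcons q a) = is_walk src dst x (src a) q && (dst a == y).
Proof. by elim: q x => [|b q IH] x /=; [rewrite eq_sym | rewrite IH andbA]. Qed.

Lemma size_dpath_lt x y p : is_dpath src dst x y p -> size p < #|T|.
Proof.
case/andP=> _ uniq_p.
have := uniq_leq_size uniq_p (s2 := enum T) (fun z _ => mem_enum T z).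
by rewrite /= size_map -cardE.
Qed.

Lemma card_spanning_arborescence_lt (F : {set Arc}) :
  (forall a, dst a != s) -> spanning_arborescence src dst s F -> #|F| < #|T|.
Proof.
move=> no_arc_to_s [_ indeg1].
have dst_inj : {in F &, injective dst}.
  move=> a b aF bF eq_ab.
  have /eqP/cards1P[c def_c] := indeg1 (dst a) (no_arc_to_s a).
  have : a \in [set e in F | dst e == dst a] by rewrite inE aF eqxx.
  have : b \in [set e in F | dst e == dst a] by rewrite inE bF eq_ab eqxx.
  by rewrite def_c !inE => /eqP-> /eqP->.
rewrite -(card_in_imset dst_inj) (@leq_ltn_trans #|[set~ s]|) //.
  by apply: subset_leq_card; apply/subsetP => _ /imsetP[a _ ->]; rewrite !inE.
by rewrite cardsC1 ltn_predL; apply/card_gt0P; exists s.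
Qed.

Lemma lambda_ge_path_avoiding (F : {set Arc}) v k :
  #|F| < k -> lambda_ge src dst tau s v k ->
  exists p, tau_path src dst tau s v p && all (fun a => a \in ~: F) p.
Proof.
move=> ltFk [P [tauP disjP]].
have [/existsP[i avoid_i] | hit] := boolP [exists i, all (fun a => a \in ~: F) (P i)].
  by exists (P i); rewrite tauP.
suff : #|'I_k| <= #|F| by rewrite card_ord leqNgt ltFk.
apply: card_le_disjoint_hitting disjP _ => i.
move: hit; rewrite negb_exists => /forallP/(_ i).
by case/allPn=> a aP; rewrite inE negbK => aF; exists a; rewrite aF aP.
Qed.

Section EarliestArrival.
Variable B : {set Arc}.

Definition B_path v p := tau_path src dst tau s v p && all (fun a => a \in B) p.
Definition reachable v := exists p, B_path v p.

Definition arrival p := last 0 (map tau p).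

(* Encodes the lexicographic order on (arrival time, number of arcs), since
   paths have fewer than #|T| arcs. *)
Definition weight p := arrival p * #|T| + size p.

Definition has_weight v k := exists p, B_path v p /\ weight p = k.

Definition key v :=
  epsilon (inhabits 0) (fun k => has_weight v k /\ forall j, has_weight v j -> k <= j).

Definition earliest v := key v %/ #|T|.

Lemma keyP v :
  reachable v -> has_weight v (key v) /\ forall j, has_weight v j -> key v <= j.
Proof.
move=> [p Bp]; rewrite /key.
apply: (epsilon_spec (inhabits 0) (fun k => has_weight v k /\ _)).
by apply: ex_minimal_nat; exists (weight p), p.
Qed.

Lemma key_le_weight v p : B_path v p -> key v <= weight p.
Proof. by move=> Bp; apply: (keyP (ex_intro _ p Bp)).2; exists p. Qed.

Lemma weight_div p : size p < #|T| -> weight p %/ #|T| = arrival p.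
Proof. by move=> lt_pT; rewrite divnMDl ?divn_small ?addn0 //; lia. Qed.

Lemma B_path_size v p : B_path v p -> size p < #|T|.
Proof. by case/andP=> /andP[/size_dpath_lt]. Qed.

Lemma earliest_le_arrival v p : B_path v p -> earliest v <= arrival p.
Proof.
move=> Bp; rewrite -(weight_div (B_path_size Bp)).
exact/leq_div2r/key_le_weight.
Qed.

Lemma B_path_rcons v q a :
  B_path v (rcons q a) ->
  [/\ B_path (src a) q, a \in B, dst a = v & arrival q <= tau a].
Proof.
rewrite /B_path /tau_path /is_dpath /tau_respecting is_walk_rcons all_rcons.
rewrite map_rcons -rcons_cons rcons_uniq map_rcons sorted_leq_rcons.
case/andP=> /andP[/andP[/andP[walk_q /eqP dst_a] /andP[_ uniq_q]] /andP[sorted_q le_qa]].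
by case/andP=> aB all_q; split; rewrite // walk_q uniq_q sorted_q all_q.
Qed.

Definition tight a :=
  [&& a \in B, key (src a) < key (dst a),
      earliest (src a) <= tau a & tau a == earliest (dst a)].

Lemma tight_arc_exists v : v != s -> reachable v -> exists a, tight a && (dst a == v).
Proof.
move=> neq_vs reach_v; have [[p [Bp wp]] _] := keyP reach_v.
case/lastP: p Bp wp => [|q a].
  by case/andP=> /andP[/andP[/= /eqP eq_sv _] _] _; rewrite eq_sv eqxx in neq_vs.
move=> Bqa wqa; have [Bq aB dst_a le_qa] := B_path_rcons Bqa.
have weight_qa : weight (rcons q a) = tau a * #|T| + (size q).+1.
  by rewrite /weight /arrival map_rcons last_rcons size_rcons.
have earliest_v : earliest v = tau a.
  rewrite /earliest -wqa weight_div; last exact: B_path_size Bqa.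
  by rewrite /arrival map_rcons last_rcons.
exists a; rewrite /tight dst_a eqxx andbT aB earliest_v eqxx andbT /=.
rewrite (leq_trans (earliest_le_arrival Bq)) // andbT.
rewrite -wqa weight_qa (leq_ltn_trans (key_le_weight Bq)) // /weight.
have : arrival q * #|T| <= tau a * #|T| by rewrite leq_mul2r le_qa orbT.
lia.
Qed.

Definition parent v := [pick a | tight a && (dst a == v)].

Definition parent_arcs := [set a | parent (dst a) == Some a].

Lemma parent_arcs_tight a : a \in parent_arcs -> tight a.
Proof. by rewrite inE /parent; case: pickP => // b /andP[tb _] /eqP[<-]. Qed.

Lemma key_walk x y p : is_walk src dst x y p -> all (fun a => a \in parent_arcs) p ->
  key x + size p <= key y.
Proof.
elim: p x => [|a p IH] x /=; first by move=> /eqP-> _; rewrite addn0.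
case/andP=> /eqP src_a walk_p /andP[aF all_p].
have /and4P[_ + _ _] := parent_arcs_tight aF; rewrite src_a.
have := IH _ walk_p all_p; lia.
Qed.

Lemma earliest_walk x y p : is_walk src dst x y p -> all (fun a => a \in parent_arcs) p ->
  path leq (earliest x) (map tau p).
Proof.
elim: p x => [|a p IH] x //= /andP[/eqP src_a walk_p] /andP[aF all_p].
have /and4P[_ _ le_xa /eqP eq_a] := parent_arcs_tight aF.
by rewrite -src_a le_xa eq_a; exact: IH.
Qed.

Lemma parent_arcs_indeg v : v != s -> reachable v ->
  #|[set a in parent_arcs | dst a == v]| = 1.
Proof.
move=> neq_vs reach_v; have [a /andP[ta dst_a]] := tight_arc_exists neq_vs reach_v.
case parent_v: (parent v) => [b|]; last first.
  by move: parent_v; rewrite /parent; case: pickP => // /(_ a); rewrite ta dst_a.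
have /andP[_ /eqP dst_b] : tight b && (dst b == v).
  by move: parent_v; rewrite /parent; case: pickP => // b' tb' [<-].
suff -> : [set a in parent_arcs | dst a == v] = [set b] by rewrite cards1.
apply/setP => c; rewrite !inE.
apply/idP/eqP => [/andP[parent_c /eqP dst_c] | ->].
  by move: parent_c; rewrite dst_c parent_v => /eqP[].
by rewrite dst_b parent_v !eqxx.
Qed.

Lemma reachable_tau_arborescence :
  (forall v, v != s -> reachable v) ->
  exists F : {set Arc}, F \subset B /\ tau_resp_arborescence src dst tau s F.
Proof.
move=> reach; exists parent_arcs; split; [|split; [split|]].
- by apply/subsetP => a /parent_arcs_tight /and4P[].
- move=> [x [p [p_nil [walk_p all_p]]]]; have := key_walk walk_p all_p.
  have : 0 < size p by rewrite lt0n size_eq0.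
  lia.
- by move=> v neq_vs; exact: parent_arcs_indeg (reach v neq_vs).
- move=> v _ p /andP[walk_p _] all_p; have := earliest_walk walk_p all_p.
  by rewrite /tau_respecting; case: (map tau p) => //= t l /andP[].
Qed.

End EarliestArrival.
End TemporalArborescences.

Theorem mainTheorem9 (T Arc : finType) (src dst : Arc -> T) (tau : Arc -> nat)
  (s : T) :
  (forall a : Arc, dst a != s) ->
  (forall v : T, v != s -> lambda_ge src dst tau s v #|T|) ->
  exists F1 F2 : {set Arc},
    tau_resp_arborescence src dst tau s F1 /\
    tau_resp_arborescence src dst tau s F2 /\
    F1 :&: F2 = set0.
Proof.
move=> no_arc_to_s lambda_n.
have reach_avoiding (F : {set Arc}) :
    #|F| < #|T| -> forall v, v != s -> reachable src dst tau s (~: F) v.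
  by move=> ltFT v neq_vs; exact: lambda_ge_path_avoiding ltFT (lambda_n v neq_vs).
have card0_lt : #|(set0 : {set Arc})| < #|T| by rewrite cards0; apply/card_gt0P; exists s.
have [F1 [_ arb1]] := reachable_tau_arborescence (reach_avoiding _ card0_lt).
have card_F1_lt := card_spanning_arborescence_lt no_arc_to_s arb1.1.
have [F2 [F2_sub arb2]] := reachable_tau_arborescence (reach_avoiding _ card_F1_lt).
exists F1, F2; do 2!split=> //.
apply/setP => a; rewrite !inE; apply/negP => /andP[aF1 /(subsetP F2_sub)].
by rewrite inE aF1.
Qed.
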